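(* Let $\{\mu_n^{(m)}:1\le n\le m\}$ be a family of smooth functions, $\mu_n^{(m)}$ a function of $(\nu_n,\dots,\nu_m)$, with $\mu_n^{(m)}(0,\dots,0)=0$, satisfying for all $1\le n\le m$ $$\mu_n^{(m)}(\nu_n,\dots,\nu_m)=\begin{cases}\dfrac{\nu_m^{m+1}}{m+1},& n=m,\\[2mm] \displaystyle\sum_{k=0}^n\binom nk\nu_m^{\,n-k}\,\mu_k^{(m-n-1)}(\nu_{k+n},\dots,\nu_{m-1}),& n<m,\end{cases}$$ (equivalently, $\partial\mu_n^{(m)}/\partial\nu_k=n\,\mu_{n-1}^{(k-1)}(\nu_{m-k+n},\dots,\nu_m)$ for $k=n,\dots,m$), with the conventions $\mu_0^{(l)}(x_0,\dots,x_l)=x_0$ and $\mu_k^{(l)}\equiv0$ if $k>l$ or $l<0$. Then for every level $m\ge1$ and all $k,l\in\{1,\dots,m\}$, $$\sum_{j=1}^m\frac{\partial\mu_k^{(m)}}{\partial\nu_j}\frac{\partial\mu_l^{(m)}}{\partial\nu_{m+1-j}}=(k+l)\mu_{k+l-1}^{(m)},\qquad \sum_{j=1}^m\partial_x\Big(\frac{\partial\mu_k^{(m)}}{\partial\nu_j}\Big)\frac{\partial\mu_l^{(m)}}{\partial\nu_{m+1-j}}=k\,\partial_x\mu_{k+l-1}^{(m)},$$ where $\mu_j^{(m)}:=0$ for $j\ge m+1$ and the second identity holds for any smooth dependence of $\nu_1,\dots,\nu_m$ on $x$. In other words, $\mu_k=\mu_k^{(m)}(\boldsymbol\nu)$ flattens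 the bracket with $\alpha_{kl}=(k+l)\mu_{k+l-1}$, $\beta_{kl}=k\partial_x\mu_{k+l-1}$ to the constant antidiagonal metric $g_{ij}=\delta_{i+j,m+1}$. *)

From HB Require Import structures.
From mathcomp Require Import all_boot all_order all_algebra.
From mathcomp Require Import all_classical all_reals all_analysis.
Set Implicit Arguments. Unset Strict Implicit. Unset Printing Implicit Defensive.
Import Order.TTheory GRing.Theory Num.Theory.
Local Open Scope ring_scope.

(* Points nu = (nu_0, nu_1, nu_2, ...) : nat -> R.  A function of
   (nu_n,...,nu_m) is encoded as a function of the whole sequence that
   only reads the coordinates it depends on. *)

Definition partial (R : realType) (f : (nat -> R) -> R) (j : nat) (nu : nat -> R) : R :=
  derive1 (fun t : R => f (fun i => if i == j then t else nu i)) (nu j).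

Definition smooth (R : realType) (f : R -> R) : Prop :=
  forall (n : nat) (x : R), derivable (derive1n n f) x 1.

(* The recursive system defining the family mu.
   [mu n m nu] stands for mu_n^{(m)}(nu_n, ..., nu_m). *)
Definition mu_family (R : realType) (mu : nat -> nat -> (nat -> R) -> R) : Prop :=
  [/\
      (forall (l : nat) (nu : nat -> R), mu 0%N l nu = nu 0%N),
      (forall (k l : nat) (nu : nat -> R), (l < k)%N -> mu k l nu = 0),
      (forall (m : nat) (nu : nat -> R), (1 <= m)%N ->
          mu m m nu = nu m ^+ m.+1 / m.+1%:R)
    &
      (forall (n m : nat) (nu : nat -> R), (1 <= n)%N -> (n < m)%N ->
          mu n m nu = \sum_(k < n.+1)
             'C(n, k)%:R * nu m ^+ (n - k) * mu k (m - n - 1)%N (fun i => nu (i + n)%N))].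

From HB Require Import structures.
From mathcomp Require Import all_boot all_order all_algebra.
From mathcomp Require Import all_classical all_reals all_analysis.
From mathcomp Require Import ring zify.
Set Implicit Arguments. Unset Strict Implicit. Unset Printing Implicit Defensive.
Import Order.TTheory GRing.Theory Num.Theory.
Local Open Scope ring_scope.

(* Put D(t) = nu_m + nu_(m-1) t + ... + nu_0 t^m.  Splitting D = nu_m + t D'
   binomially shows that the recursion is solved by
   (n+1) mu_n^(m) = [t^(m+1)] (t D)^(n+1), conventions included.  Hence
   d mu_k^(m) / d nu_j = [t^j] (t D)^k, the first sum is the coefficient of
   t^(m+1) in (t D)^k (t D)^l = (t D)^(k+l), and the second one is the same
   computation with one factor (t D)^k differentiated in x. *)

Section LowCoefficients.
Variable R : nzSemiRingType.
Implicit Types p q : {poly R}.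

Lemma coef_exp_take_poly p n e i :
  (i < n)%N -> (take_poly n p ^+ e)`_i = (p ^+ e)`_i.
Proof.
elim: e i => [|e IH] i lt_in; first by rewrite !expr0.
rewrite !exprS !coefM; apply: eq_bigr => j _.
rewrite coef_take_poly (leq_ltn_trans (leq_ord j) lt_in) IH //.
exact: leq_ltn_trans (leq_subr _ _) lt_in.
Qed.

Lemma coefXnM_exp_take_poly p n a e i :
  (i < n + a)%N -> ('X^a * take_poly n p ^+ e)`_i = ('X^a * p ^+ e)`_i.
Proof.
move=> lt_i; rewrite !coefXnM; case: ltnP => // le_ai.
by rewrite coef_exp_take_poly //; lia.
Qed.

Lemma coefM_no_const p q m : p`_0 = 0 -> q`_0 = 0 ->
  \sum_(1 <= j < m.+1) p`_j * q`_(m.+1 - j) = (p * q)`_m.+1.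
Proof.
move=> p0 q0; rewrite coefM -(big_mkord xpredT (fun j => p`_j * q`_(m.+1 - j))).
by rewrite [RHS]big_nat_recr //= subnn q0 mulr0 addr0 [RHS]big_ltn // p0 mul0r add0r.
Qed.

End LowCoefficients.

Section GeneratingPolynomial.
Variable R : numFieldType.
Implicit Types nu : nat -> R.

Definition nu_poly nu m : {poly R} := \poly_(i < m.+1) nu (m - i)%N.

Definition mu_closed n m nu : R :=
  ('X^(n.+1) * nu_poly nu m ^+ n.+1)`_m.+1 / n.+1%:R.

Lemma nu_polyS nu m : nu_poly nu m.+1 = (nu m.+1)%:P + 'X * nu_poly nu m.
Proof.
apply/polyP => i; rewrite coefD coefC coefXM !coef_poly.
by case: i => [|i] /=; rewrite ?subn0 ?addr0 ?add0r.
Qed.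

Lemma nu_poly_shift nu n k :
  nu_poly (fun i => nu (i + n)%N) k = take_poly k.+1 (nu_poly nu (k + n)).
Proof.
apply/polyP => i; rewrite coef_take_poly !coef_poly.
by case: ltnP => lt_ik; rewrite ?(ltn_addr n lt_ik) //; congr nu; lia.
Qed.

Lemma mu_closed0 m nu : mu_closed 0 m nu = nu 0%N.
Proof. by rewrite /mu_closed expr1 divr1 coefXM coef_poly ltnSn subnn. Qed.

Lemma mu_closed_gt m n nu : (m < n)%N -> mu_closed n m nu = 0.
Proof. by move=> lt_mn; rewrite /mu_closed coefXnM ltnS lt_mn mul0r. Qed.

Lemma mu_closed_diag m nu : mu_closed m m nu = nu m ^+ m.+1 / m.+1%:R.
Proof.
rewrite /mu_closed coefXnM ltnn subnn -horner_coef0 horner_exp horner_coef0.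
by rewrite coef_poly subn0.
Qed.

Lemma mu_closed_rec n m nu : (n < m)%N ->
  mu_closed n m nu = \sum_(k < n.+1)
    'C(n, k)%:R * nu m ^+ (n - k) * mu_closed k (m - n - 1) (fun i => nu (i + n)%N).
Proof.
case: m => // m lt_nm; set D := nu_poly nu m; set c := nu m.+1.
have shiftE k :
    ('X^(k.+1) * nu_poly (fun i => nu (i + n)%N) (m - n)%N ^+ k.+1)`_(m - n)%N.+1
    = ('X^(k.+1) * D ^+ k.+1)`_(m - n)%N.+1.
  by rewrite nu_poly_shift subnK ?coefXnM_exp_take_poly //; lia.
have -> : (m.+1 - n - 1 = m - n)%N by lia.
rewrite /mu_closed nu_polyS -/D -/c coefXnM ltnS ltnNge (ltnW lt_nm) subSn //=.
rewrite exprDn coef_sum big_ord_recl /= subn0 -polyC_exp mulr1 mulr1n coefC /=.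
rewrite add0r mulr_suml; apply: eq_bigr => i _.
rewrite /bump /= add1n subSS shiftE coefMn exprMn -polyC_exp -mulrA coefCM.
have bin_ratio : 'C(n.+1, i.+1)%:R = n.+1%:R * 'C(n, i)%:R / i.+1%:R :> R.
  by rewrite -natrM (mul_bin_diag n.+1) natrM mulrC mulKf // pnatr_eq0.
rewrite subSS -(mulr_natr _ 'C(n.+1, i.+1)) bin_ratio; field.
by rewrite !(addrC 1) !natr1 !pnatr_eq0.
Qed.

End GeneratingPolynomial.

Section CoefDerivative.
Variable R : realType.
Implicit Types g h : R -> {poly R}.

Definition is_coef_derive g g' :=
  forall i t, is_derive t (1 : R) (fun s => (g s)`_i) ((g' t)`_i).

Lemma derive1_coef g g' i t :
  is_coef_derive g g' -> derive1 (fun s => (g s)`_i) t = (g' t)`_i.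
Proof. by move=> dg; rewrite derive1E (@derive_val _ _ _ _ _ _ _ (dg i t)). Qed.

Lemma is_coef_derive_poly n (E E' : R -> nat -> R) :
  (forall i t, (i < n)%N -> is_derive t (1 : R) (E^~ i) (E' t i)) ->
  is_coef_derive (fun s => \poly_(i < n) E s i) (fun t => \poly_(i < n) E' t i).
Proof.
move=> dE i t; rewrite coef_poly; case: ifP => lt_in.
  have -> : (fun s => (\poly_(i < n) E s i)`_i) = E^~ i.
    by apply/funext => s; rewrite coef_poly lt_in.
  exact: dE.
have -> : (fun s => (\poly_(i < n) E s i)`_i) = cst 0.
  by apply/funext => s; rewrite coef_poly lt_in.
exact: is_derive_cst.
Qed.

Lemma is_coef_derive_cst p : is_coef_derive (fun=> p) (fun=> 0).
Proof. by move=> i t; rewrite coef0; exact: is_derive_cst. Qed.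

Lemma is_coef_deriveZ c g g' :
  is_coef_derive g g' -> is_coef_derive (fun s => c *: g s) (fun t => c *: g' t).
Proof.
move=> dg i t; rewrite coefZ.
have -> : (fun s => (c *: g s)`_i) = c \*: (fun s => (g s)`_i).
  by apply/funext => s; rewrite coefZ.
exact: is_deriveZ.
Qed.

Lemma is_coef_deriveM g g' h h' :
  is_coef_derive g g' -> is_coef_derive h h' ->
  is_coef_derive (fun s => g s * h s) (fun t => g' t * h t + g t * h' t).
Proof.
move=> dg dh i t.
have -> : (fun s => (g s * h s)`_i) =
    \sum_(j < i.+1) ((fun s => (g s)`_j) * (fun s => (h s)`_(i - j))).
  by rewrite fct_sumE; apply/funext => s; rewrite coefM.
rewrite coefD !coefM -big_split /=.
apply: is_derive_eq; first by apply: is_derive_sum => j; exact: is_deriveM.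
by apply: eq_bigr => j _ /=; rewrite /GRing.scale /= addrC mulrC [_ * (h t)`__]mulrC.
Qed.

Lemma is_coef_deriveX g g' e : is_coef_derive g g' ->
  is_coef_derive (fun s => g s ^+ e) (fun t => e%:R *: (g t ^+ e.-1 * g' t)).
Proof.
move=> dg; elim: e => [|e IH].
  by move=> i t; rewrite scale0r; exact: is_coef_derive_cst.
have expS_derive t : e.+1%:R *: (g t ^+ e * g' t) =
    e%:R *: (g t ^+ e.-1 * g' t) * g t + g t ^+ e * g' t.
  case: e {IH} => [|e]; first by rewrite scale0r mul0r add0r expr0 scale1r.
  by rewrite -!mul_polyC -[e.+2]addn1 natrD polyCD polyC1 exprS /=; ring.
move=> i t; rewrite expS_derive.
have -> : (fun s => (g s ^+ e.+1)`_i) = (fun s => (g s ^+ e * g s)`_i).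
  by apply/funext => s; rewrite exprSr.
exact: (is_coef_deriveM IH dg).
Qed.

Lemma is_coef_derive_nu_poly_set nu m j : (j <= m)%N ->
  is_coef_derive (fun t => nu_poly (fun i => if i == j then t else nu i) m)
    (fun=> 'X^(m - j)).
Proof.
move=> le_jm.
have -> : (fun=> 'X^(m - j)) = fun _ : R => \poly_(i < m.+1) ((m - i == j)%N%:R : R).
  apply/funext => _; apply/polyP => i; rewrite coef_poly coefXn.
  by case: ltnP => lt_im; [congr (_%:R); apply/eqP/eqP | case: eqP => // ?]; lia.
apply: is_coef_derive_poly => i t _.
by case: eqP => _; [exact: is_derive_id | exact: is_derive_cst].
Qed.

(* nu_0 need not be differentiable: truncating at t^m removes it. *)
Lemma is_coef_derive_take_nu_poly (nu : R -> nat -> R) m :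
  (forall i t, (0 < i <= m)%N -> derivable (nu^~ i) t 1) ->
  is_coef_derive (fun s => take_poly m (nu_poly (nu s) m))
    (fun t => take_poly m (nu_poly (fun i => derive1 (nu^~ i) t) m)).
Proof.
move=> dnu; have takeE (a : nat -> R) :
    take_poly m (nu_poly a m) = \poly_(i < m) a (m - i)%N.
  apply/polyP => i; rewrite coef_take_poly !coef_poly.
  by case: ifP => // lt_im; rewrite ltnS ltnW.
rewrite (_ : (fun s => take_poly m (nu_poly (nu s) m)) =
    fun s => \poly_(i < m) nu s (m - i)%N); last first.
  by apply/funext => s; rewrite takeE.
rewrite (_ : (fun t => take_poly m (nu_poly (fun i => derive1 (nu^~ i) t) m)) =
    fun t => \poly_(i < m) derive1 (nu^~ (m - i)%N) t); last first.
  by apply/funext => t; rewrite takeE.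
apply: is_coef_derive_poly => i t lt_im; rewrite derive1E.
by apply/derivableP/dnu; lia.
Qed.

End CoefDerivative.

Section MuFamily.
Variables (R : realType) (mu : nat -> nat -> (nat -> R) -> R).
Hypothesis mu_fam : mu_family mu.

Lemma mu_familyE n m nu : mu n m nu = mu_closed n m nu.
Proof.
case: mu_fam => mu0 mu_gt mu_diag mu_rec.
elim/ltn_ind: m n nu => m IH [|n] nu; first by rewrite mu0 mu_closed0.
case: (ltngtP m n.+1) => [lt_mn | lt_nm | ->].
- by rewrite mu_gt // mu_closed_gt.
- rewrite mu_rec // mu_closed_rec //; apply: eq_bigr => k _; rewrite IH //; lia.
- by rewrite mu_diag // mu_closed_diag.
Qed.

Lemma partial_mu k m j nu : (j <= m)%N ->
  partial (mu k m) j nu = ('X^k * nu_poly nu m ^+ k)`_j.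
Proof.
move=> le_jm; rewrite /partial.
set nuj := fun t i => if i == j then t else nu i.
have -> : (fun t => mu k m (nuj t)) =
    fun t => (k.+1%:R^-1 *: ('X^(k.+1) * nu_poly (nuj t) m ^+ k.+1))`_m.+1.
  by apply/funext => t; rewrite mu_familyE coefZ mulrC.
rewrite (derive1_coef _ _ (is_coef_deriveZ _ (is_coef_deriveM (is_coef_derive_cst _)
  (is_coef_deriveX _ (is_coef_derive_nu_poly_set nu le_jm))))).
have -> : (fun i => if i == j then nu j else nu i) = nu.
  by apply/funext => i; case: eqP => [->|].
rewrite mul0r add0r -scalerAr scalerA mulVf ?pnatr_eq0 // scale1r /=.
rewrite mulrCA -exprD coefMXn coefXnM.
have -> : (m.+1 < k.+1 + (m - j))%N = (j < k)%N by lia.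
by have -> : (m.+1 - (k.+1 + (m - j)) = j - k)%N by lia.
Qed.

Lemma partial_mu_take k m j nu : (0 < k)%N -> (j <= m)%N ->
  partial (mu k m) j nu = ('X^k * take_poly m (nu_poly nu m) ^+ k)`_j.
Proof. by move=> k_gt0 le_jm; rewrite partial_mu // coefXnM_exp_take_poly //; lia. Qed.

Lemma mu_take n m nu : (0 < n)%N ->
  mu n m nu = (n.+1%:R^-1 *: ('X^(n.+1) * take_poly m (nu_poly nu m) ^+ n.+1))`_m.+1.
Proof.
by move=> n_gt0; rewrite mu_familyE coefZ coefXnM_exp_take_poly 1?mulrC //; lia.
Qed.

Lemma sum_partial_mu k l m nu : (0 < k)%N -> (0 < l)%N ->
  \sum_(1 <= j < m.+1) partial (mu k m) j nu * partial (mu l m) (m.+1 - j)%N nu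
    = (k + l)%:R * mu (k + l - 1)%N m nu.
Proof.
move=> k_gt0 l_gt0; set D := nu_poly nu m.
have partialE j : (0 < j < m.+1)%N ->
    partial (mu k m) j nu * partial (mu l m) (m.+1 - j)%N nu
    = ('X^k * D ^+ k)`_j * ('X^l * D ^+ l)`_(m.+1 - j).
  by move=> /andP[j_gt0 lt_jm]; rewrite !partial_mu //; lia.
rewrite (eq_big_nat _ _ partialE) coefM_no_const ?coefXnM ?k_gt0 ?l_gt0 //.
rewrite mulrACA -!exprD mu_familyE /mu_closed subn1 prednK ?addn_gt0 ?k_gt0 //.
by rewrite mulrCA mulfV ?mulr1 // pnatr_eq0 -lt0n addn_gt0 k_gt0.
Qed.

Lemma sum_derive_partial_mu k l m (nu : R -> nat -> R) x :
  (0 < k)%N -> (0 < l)%N ->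
  (forall i y, (0 < i <= m)%N -> derivable (nu^~ i) y 1) ->
  \sum_(1 <= j < m.+1)
      derive1 (fun y => partial (mu k m) j (nu y)) x
      * partial (mu l m) (m.+1 - j)%N (nu x)
    = k%:R * derive1 (fun y => mu (k + l - 1)%N m (nu y)) x.
Proof.
move=> k_gt0 l_gt0 /is_coef_derive_take_nu_poly.
set g := fun y => take_poly m _; set g' := fun y => take_poly m _ => Dg.
have Dpartial j : (0 < j < m.+1)%N ->
    derive1 (fun y => partial (mu k m) j (nu y)) x
      * partial (mu l m) (m.+1 - j)%N (nu x)
    = ('X^k * (k%:R *: (g x ^+ k.-1 * g' x)))`_j * ('X^l * g x ^+ l)`_(m.+1 - j).
  move=> /andP[j_gt0 lt_jm].
  rewrite [partial (mu l m) _ _]partial_mu_take //; last by lia.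
  under eq_fun do rewrite partial_mu_take // -/(g _).
  rewrite (derive1_coef _ _
    (is_coef_deriveM (is_coef_derive_cst _) (is_coef_deriveX _ Dg))).
  by rewrite mul0r add0r.
have kl_gt0 : (0 < k + l - 1)%N by lia.
rewrite (_ : (fun y => mu (k + l - 1)%N m (nu y)) =
    fun y => ((k + l)%:R^-1 *: ('X^(k + l) * g y ^+ (k + l)))`_m.+1); last first.
  by apply/funext => y; rewrite mu_take // subn1 prednK ?addn_gt0 ?k_gt0.
rewrite (derive1_coef _ _ (is_coef_deriveZ _
  (is_coef_deriveM (is_coef_derive_cst _) (is_coef_deriveX _ Dg)))).
rewrite (eq_big_nat _ _ Dpartial) coefM_no_const ?coefXnM ?k_gt0 ?l_gt0 //.
rewrite mul0r add0r -[in RHS]scalerAr scalerA mulVf; last first.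
  by rewrite pnatr_eq0 -lt0n addn_gt0 k_gt0.
suff -> : 'X^k * (k%:R *: (g x ^+ k.-1 * g' x)) * ('X^l * g x ^+ l)
    = k%:R *: ('X^(k + l) * (g x ^+ (k + l).-1 * g' x)) by rewrite scale1r coefZ.
case: k k_gt0 {Dpartial kl_gt0} => // k _.
by rewrite (_ : (k.+1 + l).-1 = k + l)%N // !exprD -!mul_polyC; ring.
Qed.

End MuFamily.

Theorem proposition4 (R : realType) (mu : nat -> nat -> (nat -> R) -> R)
  (Hmu : mu_family mu) (m : nat) (Hm : (1 <= m)%N) (k l : nat)
  (Hk : (1 <= k <= m)%N) (Hl : (1 <= l <= m)%N) :
  (forall nu : nat -> R,
     \sum_(1 <= j < m.+1)
        partial (mu k m) j nu * partial (mu l m) (m.+1 - j)%N nu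
     = (k + l)%:R * mu (k + l - 1)%N m nu)
  /\
  (forall nu : R -> nat -> R,
     (forall i : nat, (1 <= i <= m)%N -> smooth (fun x => nu x i)) ->
     forall x : R,
       \sum_(1 <= j < m.+1)
          derive1 (fun y => partial (mu k m) j (nu y)) x
          * partial (mu l m) (m.+1 - j)%N (nu x)
       = k%:R * derive1 (fun y => mu (k + l - 1)%N m (nu y)) x).
Proof.
have [k_gt0 _] := andP Hk; have [l_gt0 _] := andP Hl.
split=> [nu | nu smooth_nu x]; first exact: sum_partial_mu.
apply: sum_derive_partial_mu => // i y i_range.
exact: (smooth_nu i i_range 0%N y).
Qed.
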